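(* Let $K$ be a perfect field, $k\subset K$ a subfield, $\lambda\in\operatorname{Emb}(K)$ with $\lambda^G=\{\sigma_1\lambda,\dots,\sigma_n\lambda\}$ ($\sigma_j\in G$, $n$ finite), and let $\overline{\lambda}$ be an extension of $\lambda$ to $\overline{K}$. Let $\alpha_1,\dots,\alpha_n$ be a basis of $K(\lambda)$ over $K$, define $\lambda_i:K\to K$ by $\lambda(x)=\sum_i\lambda_i(x)\alpha_i$, and $\beta_{ijk}\in K$ by $\alpha_i\alpha_j=\sum_k\beta_{ijk}\alpha_k$. For each $i$ write $\lambda_i=\sum_j a^{(i)}_j\sigma_j\lambda$ with $a^{(i)}_j\in\overline{K}$, and set $\overline{\lambda}_i=\sum_j a^{(i)}_j\sigma_j\overline{\lambda}:\overline{K}\to\overline{K}$. Then $\overline{\lambda}=\sum_i\overline{\lambda}_i\alpha_i$, and for all $b,c\in\overline{K}$, $\overline{\lambda}_k(bc)=\sum_{i,j}\overline{\lambda}_i(b)\overline{\lambda}_j(c)\beta_{ijk}$.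
   Context: $\overline{K}$ is a fixed algebraic closure of $K$. $\operatorname{Emb}(K)$ is the set of $k$-linear field embeddings $K\to\overline{K}$; $G=\operatorname{Aut}(\overline{K}/K)$ acts by left composition, with orbits $\lambda^G$. $K(\lambda)$ is the composite of $K$ and $\lambda(K)$ in $\overline{K}$, of degree $n$ over $K$. The coefficients $a^{(i)}_j$ exist and are unique since the distinct embeddings $\sigma_j\lambda$ are $\overline{K}$-linearly independent and each $\lambda_i$ is a $\overline{K}$-linear combination of them.
   Formalization: One of the σⱼ ∈ G is the identity automorphism of $\overline{K}$, so that λ itself appears in the orbit list as σⱼλ. The statement above fails without it. *)

From HB Require Import structures.
From mathcomp Require Import all_boot all_order all_algebra.
Set Implicit Arguments. Unset Strict Implicit. Unset Printing Implicit Defensive.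
Import Order.TTheory GRing.Theory Num.Theory.
Local Open Scope ring_scope.

Definition perfect_field (F : fieldType) : Prop :=
  forall p : nat, p \in [pchar F] -> forall x : F, exists y : F, y ^+ p = x.

Definition is_subfield (F : fieldType) (S : F -> Prop) : Prop :=
  [/\ S 0, S 1 &
      forall x y, S x -> S y -> [/\ S (x - y), S (x * y) & S x^-1]].

Definition algebraic_over (K L : fieldType) (iota : K -> L) : Prop :=
  forall x : L, exists p : {poly K}, p != 0 /\ root (map_poly iota p) x.

(* The composite K(lambda) of iota(K) and lambda(K) inside Kbar:
   the smallest subfield of Kbar containing both. *)
Definition compositum (K L : fieldType) (iota lam : K -> L) (x : L) : Prop :=
  forall S : L -> Prop, is_subfield S ->
    (forall a, S (iota a)) -> (forall a, S (lam a)) -> S x.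

Definition in_Gal (K L : fieldType) (iota : K -> L) (sigma : {rmorphism L -> L})
  : Prop := bijective sigma /\ forall a : K, sigma (iota a) = iota a.

Definition ext_coord (L : fieldType) (n : nat) (a : 'I_n -> 'I_n -> L)
  (sigma : 'I_n -> {rmorphism L -> L}) (lb : L -> L) (i : 'I_n) (y : L) : L :=
  \sum_(j < n) a i j * sigma j (lb y).

From HB Require Import structures.
From mathcomp Require Import all_boot all_order all_algebra.
From mathcomp Require Import ring.
Set Implicit Arguments. Unset Strict Implicit. Unset Printing Implicit Defensive.
Import Order.TTheory GRing.Theory Num.Theory.
Local Open Scope ring_scope.

(* The maps [x |-> sigma_j (lam x)] are distinct characters K -> Kbar, hence
   linearly independent over Kbar (Dedekind). Both claims are identities in
   the values [sigma_j (lb y)] with coefficients built from the [a i j]: the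
   first says that [\sum_i a i j * alpha i] is the Kronecker delta at the index
   of the identity, the second that a bilinear form in [sigma_j (lb b)] and
   [sigma_j (lb c)] vanishes. At the values [sigma_j (lam x)] both hold, as they
   reduce to the definition of the coordinates [lamc_i] and to the rule for
   multiplying coordinates in the basis [alpha]; by Dedekind's lemma their
   coefficients vanish, so they hold for all values, in particular for [lb]. *)

Lemma sum_delta_mull (R : pzSemiRingType) (I : finType) (i0 : I) (F : I -> R) :
  \sum_i (i == i0)%:R * F i = F i0.
Proof.
rewrite (bigD1 i0) //= eqxx mul1r big1 ?addr0 // => i /negbTE ->.
by rewrite mul0r.
Qed.

Lemma exchange_big2 (V : nmodType) (n : nat)
  (F : 'I_n -> 'I_n -> 'I_n -> 'I_n -> V) :
  \sum_i \sum_i' \sum_j \sum_j' F i i' j j' =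
  \sum_j \sum_j' \sum_i \sum_i' F i i' j j'.
Proof.
under eq_bigr => i _ do rewrite exchange_big.
rewrite exchange_big; apply: eq_bigr => j _.
under eq_bigr => i _ do rewrite exchange_big.
by rewrite exchange_big.
Qed.

Section Dedekind.

Variables (K : nzRingType) (L : idomainType) (I : finType) (f : I -> K -> L).
Hypothesis fM : forall j x y, f j (x * y) = f j x * f j y.
Hypothesis f1 : forall j, f j 1 = 1.
Hypothesis f_inj : forall j j', f j =1 f j' -> j = j'.

Lemma dedekind_indep_seq (s : seq I) (c : I -> L) : uniq s ->
  (forall x, \sum_(j <- s) c j * f j x = 0) -> forall j, j \in s -> c j = 0.
Proof.
elim: s c => [|j1 s IH] c //= /andP[j1_notin_s uniq_s] c_rel.
have c_s j : j \in s -> c j = 0.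
  move=> js.
  (* subtracting [f j1 y] times the relation at [x] from the one at [y * x]
     removes [j1] *)
  have shifted y : c j * (f j y - f j1 y) = 0.
    apply: (IH (fun j => c j * (f j y - f j1 y))) => // x.
    have := c_rel (y * x); have := c_rel x; rewrite !big_cons.
    move=> /eqP; rewrite addrC addr_eq0 => /eqP rel_x.
    move=> /eqP; rewrite addrC addr_eq0 => /eqP rel_yx.
    have -> : \sum_(j <- s) c j * (f j y - f j1 y) * f j x =
        \sum_(j <- s) c j * f j (y * x) - f j1 y * \sum_(j <- s) c j * f j x.
      by rewrite mulr_sumr -sumrB; apply: eq_bigr => i _; rewrite fM; ring.
    by rewrite rel_x rel_yx fM; ring.
  have [//|cj_neq0] := eqVneq (c j) 0.
  suff j_eq_j1 : j = j1 by rewrite -j_eq_j1 js in j1_notin_s.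
  apply: f_inj => y; apply/eqP; rewrite -subr_eq0; apply/eqP.
  by apply: (mulfI cj_neq0); rewrite shifted mulr0.
move=> j; rewrite inE => /predU1P[->|]; last exact: c_s.
have := c_rel 1; rewrite big_cons big_seq big1 ?addr0 ?f1 ?mulr1 //.
by move=> i /c_s ->; rewrite mul0r.
Qed.

Lemma dedekind_indep (c : I -> L) :
  (forall x, \sum_j c j * f j x = 0) -> forall j, c j = 0.
Proof.
move=> c_rel j.
by apply: (dedekind_indep_seq (index_enum_uniq I) c_rel); rewrite mem_index_enum.
Qed.

Lemma dedekind_indep2 (C : I -> I -> L) :
  (forall x y, \sum_j \sum_j' C j j' * f j x * f j' y = 0) ->
  forall j j', C j j' = 0.
Proof.
move=> C_rel j j'; move: j; apply: dedekind_indep => x; move: j'.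
apply: dedekind_indep => y; rewrite -[RHS](C_rel x y) [RHS]exchange_big /=.
by apply: eq_bigr => j' _; rewrite mulr_suml.
Qed.

End Dedekind.

Section CoordMulDefect.

Variables (R : comPzRingType) (n : nat) (a : 'I_n -> 'I_n -> R).
Variable g : 'I_n -> 'I_n -> 'I_n -> R.

(* With [Phi u := (\sum_j a i j * u j)_i], this is the [k]-th coordinate of
   [Phi (u * v) - Phi u * Phi v] for the multiplication with structure
   constants [g]. *)
Definition coord_mul_defect (k : 'I_n) (u v : 'I_n -> R) : R :=
  \sum_j a k j * (u j * v j) -
  \sum_i \sum_i' (\sum_j a i j * u j) * (\sum_j a i' j * v j) * g i i' k.

Definition coord_mul_defect_coef (k j j' : 'I_n) : R :=
  (j == j')%:R * a k j - \sum_i \sum_i' a i j * a i' j' * g i i' k.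

Lemma coord_mul_defect_bilinear k u v :
  coord_mul_defect k u v =
  \sum_j \sum_j' coord_mul_defect_coef k j j' * u j * v j'.
Proof.
rewrite /coord_mul_defect /coord_mul_defect_coef.
under [RHS]eq_bigr => j _ do under eq_bigr => j' _ do rewrite !mulrBl.
under [RHS]eq_bigr => j _ do rewrite sumrB.
rewrite sumrB; congr (_ - _).
  apply: eq_bigr => j _; rewrite (bigD1 j) //= eqxx mul1r mulrA big1 ?addr0 //.
  by move=> j' /negbTE; rewrite eq_sym => ->; rewrite !mul0r.
transitivity (\sum_i \sum_i' \sum_j \sum_j'
    a i j * a i' j' * g i i' k * u j * v j').
  apply: eq_bigr => i _; apply: eq_bigr => i' _.
  rewrite !mulr_suml; apply: eq_bigr => j _; rewrite mulr_sumr mulr_suml.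
  by apply: eq_bigr => j' _; ring.
rewrite exchange_big2; apply: eq_bigr => j _; apply: eq_bigr => j' _.
by rewrite !mulr_suml; apply: eq_bigr => i _; rewrite !mulr_suml.
Qed.

End CoordMulDefect.

Section ExtendedCoordinates.

Variables (K L : fieldType) (iota lam : {rmorphism K -> L}) (n : nat).
Variable sigma : 'I_n -> {rmorphism L -> L}.
Hypothesis orbit_uniq :
  forall j j', (forall x, sigma j (lam x) = sigma j' (lam x)) -> j = j'.
Variables (alpha : 'I_n -> L) (lamc : 'I_n -> K -> K).
Variables (beta : 'I_n -> 'I_n -> 'I_n -> K) (a : 'I_n -> 'I_n -> L).
Hypothesis alpha_free : forall c : 'I_n -> K,
  \sum_i iota (c i) * alpha i = 0 -> forall i, c i = 0.
Hypothesis lamc_def : forall x, lam x = \sum_i iota (lamc i x) * alpha i.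
Hypothesis beta_def :
  forall i j, alpha i * alpha j = \sum_k iota (beta i j k) * alpha k.
Hypothesis a_def :
  forall i x, iota (lamc i x) = \sum_j a i j * sigma j (lam x).

Let chi j x := sigma j (lam x).

Let chiM j x y : chi j (x * y) = chi j x * chi j y.
Proof. by rewrite /chi !rmorphM. Qed.

Let chi1 j : chi j 1 = 1.
Proof. by rewrite /chi !rmorph1. Qed.

Lemma sum_a_alpha (j0 : 'I_n) : (forall y, sigma j0 y = y) ->
  forall j, \sum_i a i j * alpha i = (j == j0)%:R.
Proof.
move=> sigma_j0 j; apply/eqP; rewrite -subr_eq0; apply/eqP.
apply: (dedekind_indep chiM chi1 orbit_uniq
          (c := fun j => \sum_i a i j * alpha i - (j == j0)%:R)) => x.
under eq_bigr => i _ do rewrite mulrBl.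
rewrite sumrB sum_delta_mull /chi sigma_j0; apply/eqP; rewrite subr_eq0; apply/eqP; rewrite [RHS]lamc_def.
under eq_bigr => i _ do rewrite mulr_suml.
rewrite exchange_big /=; apply: eq_bigr => i _.
by rewrite a_def mulr_suml; apply: eq_bigr => l _; ring.
Qed.

Lemma ext_coord_expansion (j0 : 'I_n) : (forall y, sigma j0 y = y) ->
  forall (h : L -> L) y, \sum_i ext_coord a sigma h i y * alpha i = h y.
Proof.
move=> sigma_j0 h y; rewrite /ext_coord.
under eq_bigr => i _ do rewrite mulr_suml.
rewrite exchange_big /=.
transitivity (\sum_j (j == j0)%:R * sigma j (h y));
  last by rewrite sum_delta_mull sigma_j0.
apply: eq_bigr => j _; rewrite -sum_a_alpha // mulr_suml.
by apply: eq_bigr => i _; ring.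
Qed.

Lemma coords_unique (c d : 'I_n -> K) :
  \sum_i iota (c i) * alpha i = \sum_i iota (d i) * alpha i -> c =1 d.
Proof.
move=> /eqP; rewrite -subr_eq0 -sumrB => /eqP cd_rel i; apply/eqP.
rewrite -subr_eq0; apply/eqP; apply: (alpha_free (c := fun i => c i - d i)) => /=.
by rewrite -[RHS]cd_rel; apply: eq_bigr => l _; rewrite rmorphB mulrBl.
Qed.

Lemma lamc_mul x y k :
  lamc k (x * y) = \sum_i \sum_i' lamc i x * lamc i' y * beta i i' k.
Proof.
move: k; apply: coords_unique; rewrite -lamc_def rmorphM !lamc_def.
rewrite big_distrlr /=.
under [RHS]eq_bigr => l _ do rewrite rmorph_sum mulr_suml.
under [RHS]eq_bigr => l _ do under eq_bigr => i _ do rewrite rmorph_sum mulr_suml.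
rewrite [RHS]exchange_big; apply: eq_bigr => i _.
rewrite [RHS]exchange_big; apply: eq_bigr => i' _ /=.
rewrite mulrACA beta_def mulr_sumr; apply: eq_bigr => l _.
by rewrite !rmorphM; ring.
Qed.

Local Notation defect := (coord_mul_defect a (fun i i' l => iota (beta i i' l))).

Lemma coord_mul_defect_chi x y k : defect k (chi^~ x) (chi^~ y) = 0.
Proof.
apply/eqP; rewrite subr_eq0; apply/eqP.
under eq_bigr => j _ do rewrite -chiM.
rewrite -a_def lamc_mul rmorph_sum; apply: eq_bigr => i _.
by rewrite rmorph_sum; apply: eq_bigr => i' _; rewrite !rmorphM !a_def.
Qed.

Lemma coord_mul_defect_eq0 k u v : defect k u v = 0.
Proof.
have coef0 j j' :
    coord_mul_defect_coef a (fun i i' l => iota (beta i i' l)) k j j' = 0.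
  apply: (dedekind_indep2 chiM chi1 orbit_uniq) => x y.
  by rewrite -coord_mul_defect_bilinear coord_mul_defect_chi.
rewrite coord_mul_defect_bilinear big1 // => j _.
by rewrite big1 // => j' _; rewrite coef0 !mul0r.
Qed.

End ExtendedCoordinates.

Theorem lemma3p12
  (K : fieldType) (Kbar : closedFieldType) (iota : {rmorphism K -> Kbar})
  (Kbar_alg : algebraic_over iota)
  (K_perfect : perfect_field K)
  (kS : K -> Prop) (k_sub : is_subfield kS)
  (lam : {rmorphism K -> Kbar})
  (lam_klin : forall c x : K, kS c -> lam (c * x) = iota c * lam x)
  (n : nat) (sigma : 'I_n -> {rmorphism Kbar -> Kbar})
  (sigma_G : forall j, in_Gal iota (sigma j))
  (orbit_uniq : forall j j', (forall x, sigma j (lam x) = sigma j' (lam x)) -> j = j')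
  (orbit_all : forall tau : {rmorphism Kbar -> Kbar}, in_Gal iota tau ->
      exists j, forall x, tau (lam x) = sigma j (lam x))
  (sigma_id : exists j0, forall y, sigma j0 y = y)
  (lb : {rmorphism Kbar -> Kbar}) (lb_ext : forall x : K, lb (iota x) = lam x)
  (alpha : 'I_n -> Kbar)
  (alpha_in : forall i, compositum iota lam (alpha i))
  (alpha_free : forall c : 'I_n -> K,
      \sum_(i < n) iota (c i) * alpha i = 0 -> forall i, c i = 0)
  (alpha_span : forall y, compositum iota lam y ->
      exists c : 'I_n -> K, y = \sum_(i < n) iota (c i) * alpha i)
  (lamc : 'I_n -> K -> K)
  (lamc_def : forall x, lam x = \sum_(i < n) iota (lamc i x) * alpha i)
  (beta : 'I_n -> 'I_n -> 'I_n -> K)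
  (beta_def : forall i j, alpha i * alpha j = \sum_(k < n) iota (beta i j k) * alpha k)
  (a : 'I_n -> 'I_n -> Kbar)
  (a_def : forall i x, iota (lamc i x) = \sum_(j < n) a i j * sigma j (lam x)) :
  (forall y, lb y = \sum_(i < n) ext_coord a sigma lb i y * alpha i) /\
  (forall (b c : Kbar) (k : 'I_n),
      ext_coord a sigma lb k (b * c) =
      \sum_(i < n) \sum_(j < n)
         ext_coord a sigma lb i b * ext_coord a sigma lb j c * iota (beta i j k)).
Proof.
have [j0 sigma_j0] := sigma_id.
split=> [y|b c k].
  by rewrite (ext_coord_expansion orbit_uniq lamc_def a_def sigma_j0).
apply/eqP; rewrite -subr_eq0; apply/eqP.
rewrite -[RHS](coord_mul_defect_eq0 orbit_uniq alpha_free lamc_def beta_def a_def k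
  (fun j => sigma j (lb b)) (fun j => sigma j (lb c))).
by congr (_ - _); apply: eq_bigr => j _; rewrite !rmorphM.
Qed.
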